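(* Let $\alpha,\beta,\gamma\in\mathbb{Z}[i]$ satisfy $\alpha^2+\beta^2+\gamma^2=0$, $\alpha\beta\gamma\neq 0$, and $\gcd(\alpha,\beta)\in U$. Then, after multiplying each of $\alpha,\beta,\gamma$ by a suitable unit and permuting the three coordinates, one obtains a triple $(X,Y,Z)$ satisfying $X^2+Y^2=Z^2$ with $X,Z\in O^I$, $Y=(1+i)^{2+a_1}p_2^{a_2}\cdots p_m^{a_m}$ (integers $a_j\ge 0$, $p_2,\dots,p_m$ distinct Gaussian primes lying in $O^I$), $\gcd(X,Y)\in U$ and $XYZ\neq 0$. Conversely, if $(X,Y,Z)\in\mathbb{Z}[i]^3$ satisfies $X^2+Y^2=Z^2$, $\gcd(X,Y)\in U$ and $XYZ\neq 0$, then $(X,Y,iZ)$ satisfies $X^2+Y^2+(iZ)^2=0$ with the same conditions.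
   Context: $\mathbb{Z}[i]$ is the ring of Gaussian integers, $U=\{1,-1,i,-i\}$ its unit group; for $\alpha\in\mathbb{Z}[i]$, $R(\alpha)$ and $I(\alpha)$ denote its real and imaginary parts. $\gcd(x,y)\in U$ means $x,y$ have no common non-unit divisor. $O=\{\alpha\in\mathbb{Z}[i]: R(\alpha)+I(\alpha)\equiv 1 \pmod 2\}$ is the set of odd Gaussian integers (those not divisible by $1+i$), and $O^I=\{\alpha\in O: R(\alpha)\equiv 1\pmod 4\}$. *)

From HB Require Import structures.
From mathcomp Require Import all_boot all_order all_algebra.
From mathcomp Require Import complex.
Set Implicit Arguments. Unset Strict Implicit. Unset Printing Implicit Defensive.
Import Order.TTheory GRing.Theory Num.Theory.
Local Open Scope ring_scope.

Definition gauss := complex int.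
HB.instance Definition _ := GRing.Zmodule.on gauss.

Lemma gauss_mul1 : left_id (Complex (1 : int) 0) (@mulc int).
Proof. by move=> [a b] /=; rewrite !mul1r !mul0r subr0 addr0. Qed.

Lemma gauss_mulDl : left_distributive (@mulc int) (@addc int).
Proof.
move=> [a b] [c d] [e f] /=; rewrite !mulrDl !opprD -!addrA.
by congr (Complex (_ + _) (_ + _)); rewrite addrCA.
Qed.

Lemma gauss_nz1 : Complex (1 : int) 0 != Complex 0 0.
Proof. by []. Qed.

HB.instance Definition _ := GRing.Zmodule_isComNzRing.Build gauss
  (@mulcA int) (@mulcC int) gauss_mul1 gauss_mulDl gauss_nz1.

Definition gi : gauss := Complex 0 1.

Definition gunit (x : gauss) : bool := x \in [:: 1; -1; gi; - gi].

Definition gdvd (d x : gauss) : Prop := exists q : gauss, x = q * d.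

(* gcd(x, y) \in U : x and y have no common non-unit divisor. *)
Definition gcoprime (x y : gauss) : Prop :=
  forall d : gauss, gdvd d x -> gdvd d y -> gunit d.

Definition gprime (p : gauss) : Prop :=
  p != 0 /\ ~~ gunit p /\
  forall a b : gauss, gdvd p (a * b) -> gdvd p a \/ gdvd p b.

Definition godd (a : gauss) : bool := ((real_closed.complex.Re a + real_closed.complex.Im a) %% 2)%Z == 1.

Definition goddI (a : gauss) : bool := godd a && ((real_closed.complex.Re a %% 4)%Z == 1).

From HB Require Import structures.
From mathcomp Require Import all_boot all_order all_algebra.
From mathcomp Require Import complex.
From mathcomp Require Import zify ring.
From Stdlib Require Import Classical.
Set Implicit Arguments. Unset Strict Implicit. Unset Printing Implicit Defensive.
Import Order.TTheory GRing.Theory Num.Theory.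
Local Open Scope ring_scope.
Local Notation Re := real_closed.complex.Re.
Local Notation Im := real_closed.complex.Im.
Implicit Types (a b c d p u v w x y z A B E X Y Z : gauss).

(* Z[i] is Euclidean for the norm, so irreducibles are prime and every nonzero
   Gaussian integer is a unit times a power of 1 + i times primes of O^I.
   Since x^2 = x mod 1 + i, a primitive solution of a^2 + b^2 + c^2 = 0 has
   exactly one even entry E.  Odd squares have imaginary part divisible by 4,
   which forces (1 + i)^2 | E; real parts mod 4 then show that, once the odd
   entries are normalised into O^I, their squares occur with opposite signs,
   so they are the leg and the hypotenuse of a Pythagorean triple whose even
   leg is E up to a unit. *)

Lemma ReD x y : Re (x + y) = Re x + Re y. Proof. by case: x; case: y. Qed.
Lemma ImD x y : Im (x + y) = Im x + Im y. Proof. by case: x; case: y. Qed.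
Lemma ReN x : Re (- x) = - Re x. Proof. by case: x. Qed.
Lemma ImN x : Im (- x) = - Im x. Proof. by case: x. Qed.
Lemma ReM x y : Re (x * y) = Re x * Re y - Im x * Im y.
Proof. by case: x; case: y. Qed.
Lemma ImM x y : Im (x * y) = Re x * Im y + Im x * Re y.
Proof. by case: x; case: y. Qed.

Definition ReImE := (ReD, ImD, ReN, ImN, ReM, ImM).

Lemma gauss_eq x y : Re x = Re y -> Im x = Im y -> x = y.
Proof. by case: x; case: y => /= ? ? ? ? -> ->. Qed.

Definition gnorm (x : gauss) : int := Re x ^+ 2 + Im x ^+ 2.

Lemma gnormM x y : gnorm (x * y) = gnorm x * gnorm y.
Proof. by rewrite /gnorm !ReImE; ring. Qed.

Lemma gnorm_ge0 x : 0 <= gnorm x.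
Proof. by rewrite /gnorm addr_ge0 ?sqr_ge0. Qed.

Lemma gnorm_eq0 x : (gnorm x == 0) = (x == 0).
Proof.
apply/eqP/eqP=> [|-> //]; rewrite /gnorm => nx0.
by apply: gauss_eq => /=; nia.
Qed.

Lemma gmulf_neq0 x y : x != 0 -> y != 0 -> x * y != 0.
Proof. by rewrite -!gnorm_eq0 gnormM; apply: mulf_neq0. Qed.

Lemma gnorm_ind (P : gauss -> Prop) :
  (forall x, (forall y, gnorm y < gnorm x -> P y) -> P x) -> forall x, P x.
Proof.
move=> IH x; have [n lt_xn] := ubnP (absz (gnorm x)).
elim: n x lt_xn => // n IHn x lt_xn; apply: IH => y lt_yx.
by apply: IHn; have := gnorm_ge0 y; lia.
Qed.

Lemma gunitE x : gunit x = (gnorm x == 1).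
Proof.
rewrite /gunit /gnorm !inE; apply/idP/eqP=> [/or4P[]/eqP-> //|].
case: x => a b /=; rewrite !expr2 => nx1.
have : (a = 1 \/ a = -1) /\ b = 0 \/ a = 0 /\ (b = 1 \/ b = -1) by nia.
by case=> [[[->|->] ->] | [-> [->|->]]].
Qed.

Lemma gunit_mull u x : gunit u -> gunit (u * x) = gunit x.
Proof. by rewrite !gunitE gnormM => /eqP->; rewrite mul1r. Qed.

Lemma gunitM u v : gunit u -> gunit v -> gunit (u * v).
Proof. by move=> uu; rewrite gunit_mull. Qed.

Lemma gunit_neq0 u : gunit u -> u != 0.
Proof. by rewrite gunitE -gnorm_eq0 => /eqP->. Qed.

Lemma gunit_inv u : gunit u -> exists2 v, gunit v & v * u = 1.
Proof.
by rewrite /gunit !inE => /or4P[]/eqP->;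
  [exists 1 | exists (-1) | exists (- gi) | exists gi].
Qed.

Lemma gunit_sqr u : gunit u -> u ^+ 2 = 1 \/ u ^+ 2 = -1.
Proof. by rewrite /gunit !inE => /or4P[]/eqP->; [left | left | right | right]. Qed.

Lemma sqr_gunit_mul u x : gunit u -> x ^+ 2 = u ^+ 2 * (u * x) ^+ 2.
Proof. by move=> /gunit_sqr[] u2; rewrite exprMn mulrA u2; ring. Qed.

Lemma gnorm_lt_mull p z : p != 0 -> ~~ gunit p -> z != 0 -> gnorm z < gnorm (p * z).
Proof.
rewrite gunitE -!gnorm_eq0 gnormM => p0 pnu z0.
by have := gnorm_ge0 p; have := gnorm_ge0 z; nia.
Qed.

Lemma gdvd_refl x : gdvd x x.
Proof. by exists 1; rewrite mul1r. Qed.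

Lemma gdvd0 x : gdvd x 0.
Proof. by exists 0; rewrite mul0r. Qed.

Lemma gdvd_trans d x y : gdvd d x -> gdvd x y -> gdvd d y.
Proof. by move=> [q ->] [r ->]; exists (r * q); rewrite mulrA. Qed.

Lemma gdvd_mull d x y : gdvd d x -> gdvd d (y * x).
Proof. by move=> [q ->]; exists (y * q); rewrite mulrA. Qed.

Lemma gdvd_mulr d x y : gdvd d x -> gdvd d (x * y).
Proof. by rewrite mulrC; apply: gdvd_mull. Qed.

Lemma gdvd_add d x y : gdvd d x -> gdvd d y -> gdvd d (x + y).
Proof. by move=> [q ->] [r ->]; exists (q + r); rewrite mulrDl. Qed.

Lemma gdvd_opp d x : gdvd d x -> gdvd d (- x).
Proof. by move=> [q ->]; exists (- q); rewrite mulNr. Qed.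

Lemma gdvd_neq0 d x : x != 0 -> gdvd d x -> d != 0.
Proof. by move=> x0 [q ex]; apply: contraNneq x0 => d0; rewrite ex d0 mulr0. Qed.

Lemma gdvd_unit_mulr u d x : gunit u -> gdvd d (u * x) -> gdvd d x.
Proof.
by move=> /gunit_inv[v _ vu] /(gdvd_mull v); rewrite mulrA vu mul1r.
Qed.

Lemma gdvd_unit_mull u d x : gunit u -> gdvd d x -> gdvd (u * d) x.
Proof.
by move=> /gunit_inv[v _ vu] [q ->]; exists (q * v); rewrite -mulrA (mulrA v) vu mul1r.
Qed.

Lemma gcoprime_sym x y : gcoprime x y -> gcoprime y x.
Proof. by move=> cxy d dy dx; apply: cxy. Qed.

Lemma gcoprime_unit_mul u v x y :
  gunit u -> gunit v -> gcoprime x y -> gcoprime (u * x) (v * y).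
Proof.
move=> uu vu cxy d dx dy.
by apply: cxy; [apply: gdvd_unit_mulr dx | apply: gdvd_unit_mulr dy].
Qed.

Lemma round_divz (s n : int) : 0 < n -> exists q, 4 * (s - q * n) ^+ 2 <= n ^+ 2.
Proof.
move=> n0; exists ((2 * s + n) %/ (2 * n))%Z.
have := divz_eq (2 * s + n) (2 * n).
have := modz_ge0 (2 * s + n) (_ : 2 * n != 0).
have := ltz_pmod (2 * s + n) (_ : 0 < 2 * n).
by nia.
Qed.

Lemma gauss_edivP a b : b != 0 -> exists q, gnorm (a - q * b) < gnorm b.
Proof.
rewrite -gnorm_eq0 => b0; have n0 : 0 < gnorm b by have := gnorm_ge0 b; lia.
have [q1 h1] := round_divz (Re a * Re b + Im a * Im b) n0.
have [q2 h2] := round_divz (Im a * Re b - Re a * Im b) n0.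
exists (Complex q1 q2 : gauss).
(* N(a - q b) N(b) = N((a - q b) conj b) and (a - q b) conj b = a conj b - q N(b) *)
have key : gnorm (a - (Complex q1 q2 : gauss) * b) * gnorm b =
    (Re a * Re b + Im a * Im b - q1 * gnorm b) ^+ 2 +
    (Im a * Re b - Re a * Im b - q2 * gnorm b) ^+ 2.
  by rewrite /gnorm !ReImE /=; ring.
have := gnorm_ge0 (a - (Complex q1 q2 : gauss) * b).
move: key h1 h2 n0; move: (gnorm (a - _)) (gnorm b) => M n.
move: (Re a * Re b + _ - _) (Im a * Re b - _ - _) => S T; nia.
Qed.

Lemma gbezout a b : exists d x y, [/\ d = x * a + y * b, gdvd d a & gdvd d b].
Proof.
elim/gnorm_ind: b a => b IH a.
have [->|b0] := eqVneq b 0.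
  exists a, 1, 0; split; last exact: gdvd0; last exact: gdvd_refl.
  by rewrite mul1r mul0r addr0.
have [q ltr] := gauss_edivP a b0.
have [d [x [y [exy db dr]]]] := IH _ ltr b.
exists d, y, (x - y * q); split=> //; first by rewrite exy; ring.
have -> : a = (a - q * b) + q * b by ring.
by apply: gdvd_add => //; apply: gdvd_mull.
Qed.

Definition girred (p : gauss) : Prop :=
  [/\ p != 0, ~~ gunit p & forall x y, p = x * y -> gunit x \/ gunit y].

Lemma girred_prime p : girred p -> gprime p.
Proof.
case=> p0 pnu pirr; split=> //; split=> // a b pab.
have [d [x [y [exy [c ecd] da]]]] := gbezout p a.
case: (pirr _ _ ecd) => [cu|du].
  by left; rewrite ecd; apply: gdvd_unit_mull.
right; have [d' _ d'd] := gunit_inv du.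
have -> : b = d' * (x * b * p + y * (a * b)) by rewrite -[LHS]mul1r -d'd exy; ring.
apply/gdvd_mull/gdvd_add; first exact/gdvd_mull/gdvd_refl.
exact: gdvd_mull.
Qed.

Lemma girred_factor x : x != 0 -> ~~ gunit x -> exists p z, girred p /\ x = p * z.
Proof.
elim/gnorm_ind: x => x IH x0 xnu.
have [[y [z [exyz ynu znu]]]|irr] :=
  classic (exists y z, [/\ x = y * z, ~~ gunit y & ~~ gunit z]); last first.
  exists x, 1; split; last by rewrite mulr1.
  split=> // y z exyz; apply: NNPP => nu; apply: irr; exists y, z.
  by split=> //; apply/negP => ?; apply: nu; [left | right].
have y0 : y != 0 by apply: contraNneq x0 => y0; rewrite exyz y0 mul0r.
have z0 : z != 0 by apply: contraNneq x0 => z0; rewrite exyz z0 mulr0.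
have lt_yx : gnorm y < gnorm x by rewrite exyz mulrC gnorm_lt_mull.
have [p [w [pirr eyw]]] := IH y lt_yx y0 ynu.
by exists p, (w * z); rewrite exyz eyw mulrA.
Qed.

Lemma gprime_unit_mull u p : gunit u -> gprime p -> gprime (u * p).
Proof.
move=> uu [p0 [pnu pp]]; split; first exact: gmulf_neq0 (gunit_neq0 uu) p0.
split; first by rewrite gunit_mull.
move=> a b uab; have pab : gdvd p (a * b) by apply: gdvd_trans uab; exists u.
by case: (pp _ _ pab) => [pa | pb]; [left | right]; apply: gdvd_unit_mull.
Qed.

Lemma gdvd1iP x : gdvd (1 + gi) x <-> ~~ godd x.
Proof.
rewrite /godd; split=> [[q ->] | xe]; first by rewrite !ReImE /=; lia.
exists (Complex ((Re x + Im x) %/ 2)%Z (Im x - ((Re x + Im x) %/ 2)%Z) : gauss).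
by apply: gauss_eq; rewrite !ReImE /=; have := divz_eq (Re x + Im x) 2; lia.
Qed.

Lemma goddD x y : godd (x + y) = godd x (+) godd y.
Proof. by rewrite /godd !ReImE; lia. Qed.

Lemma godd_sqr x : godd (x ^+ 2) = godd x.
Proof.
rewrite /godd expr2 !ReImE.
by have := divz_eq (Re x) 2; have := divz_eq (Im x) 2; nia.
Qed.

Lemma godd_sqr_Im x : godd x -> (Im (x ^+ 2) %% 4 = 0)%Z.
Proof.
rewrite /godd expr2 ImM => /eqP ox.
by have := divz_eq (Re x) 2; have := divz_eq (Im x) 2; nia.
Qed.

Lemma goddI_sqr_Re x : goddI x -> (Re (x ^+ 2) %% 4 = 1)%Z.
Proof.
rewrite /goddI /godd expr2 ReM => /andP[/eqP ox /eqP rx].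
by have := divz_eq (Re x) 4; have := divz_eq (Im x) 2; nia.
Qed.

Lemma godd_neq0 x : godd x -> x != 0.
Proof. by apply: contraTneq => ->. Qed.

Lemma godd_normalize x : godd x -> exists2 u, gunit u & goddI (u * x).
Proof.
rewrite /goddI /godd => /eqP ox.
have : ((Re x %% 4 = 1) \/ (Re x %% 4 = 3) \/ (Im x %% 4 = 3) \/ (Im x %% 4 = 1))%Z.
  by lia.
by case=> [rx | [rx | [rx | rx]]];
  [exists 1 | exists (-1) | exists gi | exists (- gi)] => //;
  rewrite !ReImE /=; apply/andP; split; apply/eqP; lia.
Qed.

Lemma gauss_factor x : x != 0 -> exists u k ps,
  [/\ gunit u, forall p, p \in ps -> gprime p /\ goddI p &
      x = u * (1 + gi) ^+ k * \prod_(p <- ps) p].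
Proof.
elim/gnorm_ind: x => x IH x0.
have [xu | xnu] := boolP (gunit x).
  by exists x, 0%N, [::]; split=> //; rewrite big_nil !mulr1.
have [p [z [pirr exz]]] := girred_factor x0 xnu.
have [p0 pnu _] := pirr.
have z0 : z != 0 by apply: contraNneq x0 => z0; rewrite exz z0 mulr0.
have lt_zx : gnorm z < gnorm x by rewrite exz gnorm_lt_mull.
have [u [k [ps [uu ps_prime ez]]]] := IH z lt_zx z0.
have [po | pe] := boolP (godd p); last first.
  have [y ey] := (gdvd1iP p).2 pe.
  have yu : gunit y by case: pirr => _ _ /(_ _ _ ey) [].
  exists (y * u), k.+1, ps; split=> //; first exact: gunitM.
  by rewrite exz ez ey exprS; ring.
have [v vu pI] := godd_normalize po.
have [w wu wv] := gunit_inv vu.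
exists (w * u), k, (v * p :: ps); split; first exact: gunitM.
  move=> q; rewrite inE => /predU1P[-> | /ps_prime //].
  by split=> //; apply/gprime_unit_mull/girred_prime.
have ep : p = w * (v * p) by rewrite mulrA wv mul1r.
by rewrite big_cons exz ez {1}ep; ring.
Qed.

Definition even_normal (Y : gauss) : Prop :=
  exists (a1 : nat) (s : seq (gauss * nat)),
    [/\ uniq (map fst s),
        (forall pa, pa \in s -> gprime pa.1 /\ goddI pa.1) &
        Y = (1 + gi) ^+ (2 + a1) * \prod_(pa <- s) pa.1 ^+ pa.2].

Definition pyth_normal (X Y Z : gauss) : Prop :=
  [/\ X ^+ 2 + Y ^+ 2 = Z ^+ 2, goddI X, goddI Z, even_normal Y &
      gcoprime X Y /\ X * Y * Z != 0].

Definition sumsq3_normal (a b c : gauss) : Prop :=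
  exists (u v w : gauss) (X Y Z : gauss),
    [/\ gunit u, gunit v, gunit w &
        perm_eq [:: X; Y; Z] [:: u * a; v * b; w * c]] /\ pyth_normal X Y Z.

Lemma even_normal_dvd4 E : E != 0 -> gdvd ((1 + gi) ^+ 2) E ->
  exists2 w, gunit w & even_normal (w * E).
Proof.
move=> E0 [q eE].
have q0 : q != 0 by apply: contraNneq E0 => q0; rewrite eE q0 mul0r.
have [u [k [ps [uu ps_prime eq_q]]]] := gauss_factor q0.
have [w wu wu1] := gunit_inv uu.
exists w => //; exists k, [seq (p, count_mem p ps) | p <- undup ps]; split.
- by rewrite (_ : map _ _ = undup ps) ?undup_uniq //; elim: (undup ps) => //= p s ->.
- by move=> _ /mapP[p pin ->]; apply: ps_prime; rewrite -mem_undup.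
rewrite big_map /= prodr_undup_exp_count eE eq_q exprD.
transitivity ((w * u) * ((1 + gi) ^+ 2 * (1 + gi) ^+ k * \prod_(p <- ps) p)).
  by ring.
by rewrite wu1 mul1r.
Qed.

Lemma sumsq3_not_all_odd a b c :
  a ^+ 2 + b ^+ 2 + c ^+ 2 = 0 -> ~~ [&& godd a, godd b & godd c].
Proof.
move/(congr1 godd); rewrite !goddD !godd_sqr (_ : godd 0 = false) //.
by case: (godd a); case: (godd b); case: (godd c).
Qed.

Lemma gcoprime_sumsq3 a b c :
  a != 0 -> a ^+ 2 + b ^+ 2 + c ^+ 2 = 0 -> gcoprime a b -> gcoprime a c.
Proof.
move=> a0 h cab d da dc; apply: contraT => dnu.
have [p [z [pirr edz]]] := girred_factor (gdvd_neq0 a0 da) dnu.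
have [_ [pnu pprime]] := girred_prime pirr.
have pd : gdvd p d by exists z; rewrite edz mulrC.
have pa := gdvd_trans pd da; have pc := gdvd_trans pd dc.
have pb2 : gdvd p (b * b).
  have -> : b * b = - (a * a) - c * c by rewrite -[RHS]addr0 -h; ring.
  by apply: gdvd_add; apply: gdvd_opp; apply: gdvd_mulr.
have pb : gdvd p b by case: (pprime _ _ pb2).
by move: pnu; rewrite (cab p pa pb).
Qed.

Lemma Im_sqr_mul1i x : Im ((x * (1 + gi)) ^+ 2) = 2 * Re (x ^+ 2).
Proof. by rewrite !expr2 !ReImE /=; ring. Qed.

Lemma Re_sqr_mul1i2 x : Re ((x * (1 + gi) ^+ 2) ^+ 2) = - 4 * Re (x ^+ 2).
Proof. by rewrite !expr2 !ReImE /=; ring. Qed.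

Lemma sumsq3_even_dvd4 A B E : A ^+ 2 + B ^+ 2 + E ^+ 2 = 0 ->
  godd A -> godd B -> ~~ godd E -> gdvd ((1 + gi) ^+ 2) E.
Proof.
move=> h oA oB /gdvd1iP[E1 eE1].
have [oE1 | /gdvd1iP[E2 eE2]] := boolP (godd E1); last first.
  by exists E2; rewrite eE1 eE2 -mulrA.
(* Im (E^2) = 2 Re (E1^2) is 2 mod 4, but Im (A^2) and Im (B^2) are 0 mod 4 *)
move: h => /(congr1 (@Im int)); rewrite !ImD eE1 Im_sqr_mul1i /=.
have := godd_sqr_Im oA; have := godd_sqr_Im oB; have := godd_sqr_Im oE1.
by move: (godd_sqr E1); rewrite oE1 /godd => /eqP; lia.
Qed.

Lemma sumsq3_unit_sqr A B E uA uB : A ^+ 2 + B ^+ 2 + E ^+ 2 = 0 ->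
  gdvd ((1 + gi) ^+ 2) E -> gunit uA -> goddI (uA * A) ->
  gunit uB -> goddI (uB * B) -> uB ^+ 2 = - uA ^+ 2.
Proof.
move=> h [q eE] uAu /goddI_sqr_Re oA uBu /goddI_sqr_Re oB.
move: h; rewrite eE (sqr_gunit_mul A uAu) (sqr_gunit_mul B uBu) => /(congr1 (@Re int)).
(* mod 4, Re (A^2) = uA^2, Re (B^2) = uB^2 and Re (E^2) = 0 *)
rewrite !ReD Re_sqr_mul1i2.
by case: (gunit_sqr uAu) => ->; case: (gunit_sqr uBu) => ->;
  rewrite ?opprK //= ?mul1r ?mulN1r ?ReN; lia.
Qed.

Lemma pyth_normal_of_sumsq3 A B E : A ^+ 2 + B ^+ 2 + E ^+ 2 = 0 ->
  godd A -> godd B -> ~~ godd E -> E != 0 -> gcoprime A E -> gcoprime B E ->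
  exists uA uB uE, [/\ gunit uA, gunit uB, gunit uE &
    pyth_normal (uA * A) (uE * E) (uB * B) \/ pyth_normal (uB * B) (uE * E) (uA * A)].
Proof.
move=> h oA oB eE E0 cAE cBE.
have E4 := sumsq3_even_dvd4 h oA oB eE.
have [uA uAu XI] := godd_normalize oA.
have [uB uBu ZI] := godd_normalize oB.
have uB2 := sumsq3_unit_sqr h E4 uAu XI uBu ZI.
have [w wu nY] := even_normal_dvd4 E0 E4.
have [v vu vw] := gunit_inv wu.
exists uA, uB, w; split=> //.
set X := uA * A in XI *; set Z := uB * B in ZI *; set Y := w * E in nY *.
have eXYZ : X ^+ 2 - Z ^+ 2 + (uA * v) ^+ 2 * Y ^+ 2 = 0.
  rewrite !exprMn uB2.
  transitivity (uA ^+ 2 * (A ^+ 2 + B ^+ 2 + (v * w) ^+ 2 * E ^+ 2)); first by ring.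
  by rewrite vw expr1n mul1r h mulr0.
have X0 := godd_neq0 (andP XI).1; have Z0 := godd_neq0 (andP ZI).1.
have Y0 : Y != 0 := gmulf_neq0 (gunit_neq0 wu) E0.
have [d1 | dN1] := gunit_sqr (gunitM uAu vu); [left | right]; split=> //.
- by apply/eqP; rewrite -subr_eq0 -eXYZ d1; apply/eqP; ring.
- exact: conj (gcoprime_unit_mul uAu wu cAE) (gmulf_neq0 (gmulf_neq0 X0 Y0) Z0).
- by apply/eqP; rewrite -subr_eq0 -oppr_eq0 -eXYZ dN1; apply/eqP; ring.
- exact: conj (gcoprime_unit_mul uBu wu cBE) (gmulf_neq0 (gmulf_neq0 Z0 Y0) X0).
Qed.

Lemma sumsq3_normal_even_last a b c : a ^+ 2 + b ^+ 2 + c ^+ 2 = 0 -> c != 0 ->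
  gcoprime a c -> gcoprime b c -> ~~ godd c -> sumsq3_normal a b c.
Proof.
move=> h c0 cac cbc ec.
have odd_coprime x : gcoprime x c -> godd x.
  move=> cxc; apply: contraT => ex.
  by have := cxc _ ((gdvd1iP x).2 ex) ((gdvd1iP c).2 ec).
have [uA [uB [uE [uAu uBu uEu [n|n]]]]] :=
  pyth_normal_of_sumsq3 h (odd_coprime a cac) (odd_coprime b cbc) ec c0 cac cbc.
- exists uA, uB, uE, (uA * a), (uE * c), (uB * b); split=> //; split=> //.
  by rewrite perm_cons; exact: permEl (perm_rot 1 [:: uB * b; uE * c]).
- exists uA, uB, uE, (uB * b), (uE * c), (uA * a); split=> //; split=> //.
  exact: permEl (perm_rot 1 [:: uA * a; uB * b; uE * c]).
Qed.

Lemma sumsq3_normal_rotate a b c : sumsq3_normal b c a -> sumsq3_normal a b c.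
Proof.
move=> [u [v [w [X [Y [Z [[uu vu wu pXYZ] nXYZ]]]]]]].
exists w, u, v, X, Y, Z; split=> //; split=> //.
exact: perm_trans pXYZ (permEl (perm_rot 1 [:: w * a; u * b; v * c])).
Qed.

Theorem theorem4p3 :
  (forall alpha beta gamma : gauss,
     alpha ^+ 2 + beta ^+ 2 + gamma ^+ 2 = 0 ->
     alpha * beta * gamma != 0 ->
     gcoprime alpha beta ->
     exists (u v w : gauss) (X Y Z : gauss),
       [/\ gunit u, gunit v, gunit w &
           perm_eq [:: X; Y; Z] [:: u * alpha; v * beta; w * gamma]] /\
       [/\ X ^+ 2 + Y ^+ 2 = Z ^+ 2, goddI X, goddI Z,
           (exists (a1 : nat) (s : seq (gauss * nat)),
              [/\ uniq (map fst s),
                  (forall pa, pa \in s -> gprime pa.1 /\ goddI pa.1) &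
                  Y = (1 + gi) ^+ (2 + a1) * \prod_(pa <- s) pa.1 ^+ pa.2]) &
           gcoprime X Y /\ X * Y * Z != 0]) /\
  (forall X Y Z : gauss,
     X ^+ 2 + Y ^+ 2 = Z ^+ 2 -> gcoprime X Y -> X * Y * Z != 0 ->
     [/\ X ^+ 2 + Y ^+ 2 + (gi * Z) ^+ 2 = 0, gcoprime X Y &
         X * Y * (gi * Z) != 0]).
Proof.
split=> [a b c h abc0 cab | X Y Z h cXY XYZ0]; last first.
  split=> //; last by rewrite mulrCA gmulf_neq0.
  by rewrite exprMn (_ : gi ^+ 2 = -1) // -h; ring.
change (sumsq3_normal a b c).
have a0 : a != 0 by apply: contraNneq abc0 => ->; rewrite !mul0r.
have b0 : b != 0 by apply: contraNneq abc0 => ->; rewrite mulr0 mul0r.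
have c0 : c != 0 by apply: contraNneq abc0 => ->; rewrite mulr0.
have hbac : b ^+ 2 + a ^+ 2 + c ^+ 2 = 0 by rewrite -h; ring.
have hbca : b ^+ 2 + c ^+ 2 + a ^+ 2 = 0 by rewrite -h; ring.
have hcab : c ^+ 2 + a ^+ 2 + b ^+ 2 = 0 by rewrite -h; ring.
have cac := gcoprime_sumsq3 a0 h cab.
have cbc := gcoprime_sumsq3 b0 hbac (gcoprime_sym cab).
have [oc | ec] := boolP (godd c); last exact: sumsq3_normal_even_last h c0 cac cbc ec.
have [oa | ea] := boolP (godd a); last first.
  apply: sumsq3_normal_rotate.
  exact: sumsq3_normal_even_last hbca a0 (gcoprime_sym cab) (gcoprime_sym cac) ea.
have [ob | eb] := boolP (godd b); last first.
  do 2 apply: sumsq3_normal_rotate.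
  exact: sumsq3_normal_even_last hcab b0 (gcoprime_sym cbc) cab eb.
by have := sumsq3_not_all_odd h; rewrite oa ob oc.
Qed.
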